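(* Let $\underline{d}=(d_0,\dots,d_n)\in\mathbb{N}^{n+1}$ and let $M$ be the quiver module (for the equioriented type A quiver $0\to1\to\cdots\to n$ over $\mathbb{C}$) associated with the following lace diagram: in column $x$ place the dots $(x,y)$ for $0\le y<d_x$ (columns aligned at the bottom), and join every pair of dots $(x,y),(x+1,y)$ that are both present by a segment. Then $\mathrm{Ext}(M,M)=0$.
   Context: The quiver module associated with a lace diagram has at vertex $x$ the vector space with basis the dots of column $x$, and the map from vertex $x-1$ to vertex $x$ sends a dot to the dot it is joined to by a segment in column $x$, or to $0$ if there is no such segment. $\mathrm{Ext}=\mathrm{Ext}^1$ in the category of quiver modules. *)

From mathcomp Require Import all_boot all_algebra.
From mathcomp Require Import complex Rstruct.
Set Implicit Arguments. Unset Strict Implicit. Unset Printing Implicit Defensive.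
Import GRing.Theory.
Local Open Scope ring_scope.

Definition Cplx : fieldType := (Rdefinitions.R)[i].

(* Vectors are ROW vectors: the map of
   the arrow i -> i+1 is a matrix A_i : 'M_(dim i, dim (i+1)) acting by
   v |-> v *m A_i. *)
Definition src (n : nat) (i : 'I_n) : 'I_n.+1 := widen_ord (leqnSn n) i.
Definition tgt (n : nat) (i : 'I_n) : 'I_n.+1 := lift ord0 i.

Record qrep (F : fieldType) (n : nat) := QRep {
  qdim : 'I_n.+1 -> nat;
  qmap : forall i : 'I_n, 'M[F]_(qdim (src i), qdim (tgt i))
}.

Definition qfam (F : fieldType) (n : nat) (M N : qrep F n) :=
  forall x : 'I_n.+1, 'M[F]_(qdim M x, qdim N x).

Definition is_qmorph (F : fieldType) (n : nat) (M N : qrep F n)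
  (f : qfam M N) : Prop :=
  forall i : 'I_n, f (src i) *m qmap N i = qmap M i *m f (tgt i).

Definition is_ses (F : fieldType) (n : nat) (M E N : qrep F n)
  (j : qfam M E) (p : qfam E N) : Prop :=
  [/\ is_qmorph j, is_qmorph p &
      forall x : 'I_n.+1,
        [/\ row_free (j x), row_full (p x) & (j x == kermx (p x))%MS]].

Definition ses_splits (F : fieldType) (n : nat) (E N : qrep F n)
  (p : qfam E N) : Prop :=
  exists s : qfam N E, is_qmorph s /\ forall x : 'I_n.+1, s x *m p x = 1%:M.

(* Ext^1(N, M) = 0 (Yoneda Ext^1 in the category of quiver modules):
   every extension 0 -> M -> E -> N -> 0 splits. *)
Definition ext1_zero (F : fieldType) (n : nat) (N M : qrep F n) : Prop :=
  forall (E : qrep F n) (j : qfam M E) (p : qfam E N),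
    is_ses j p -> ses_splits p.

(* Basis vector of dot (x,y) is the y-th unit row vector; the arrow
   x -> x+1 sends it to the dot (x+1,y) if present, else to 0. *)
Definition lace_module (F : fieldType) (n : nat) (d : 'I_n.+1 -> nat)
  : qrep F n :=
  @QRep F n d (fun i => \matrix_(a < d (src i), b < d (tgt i))
                          ((nat_of_ord a == nat_of_ord b)%:R : F)).

From mathcomp Require Import all_boot all_algebra.
From mathcomp Require Import complex Rstruct.
Set Implicit Arguments. Unset Strict Implicit. Unset Printing Implicit Defensive.
Import GRing.Theory.
Local Open Scope ring_scope.

(* Row y of the lace diagram splits into strands, maximal runs of columns
   a..b with y < d_x, each spanning an interval summand of M.  Given an
   extension 0 -> M -> E -> M -> 0, a section is built strand by strand: lift
   the dot (a, y) to some w in E_a.  The push of w to column b+1 lies in the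
   kernel of p, i.e. in the image of j, and there only involves rows below y;
   as those rows run unbroken from a to b+1, correcting w by an element of the
   image of j at column a makes its push to column b+1 vanish.  Pushing the
   corrected lift along the strand then commutes with the arrows. *)

Definition unit_row (F : fieldType) (m y : nat) : 'rV[F]_m :=
  \row_(b < m) (y == b)%:R.

Section UnitRow.
Variable F : fieldType.

Lemma unit_row_delta m (y : 'I_m) : unit_row F m y = delta_mx 0 y.
Proof. by apply/rowP => c; rewrite !mxE eqxx eq_sym. Qed.

Lemma unit_row_mul m k (y : 'I_m) (B : 'M[F]_(m, k)) :
  unit_row F m y *m B = row y B.
Proof. by rewrite unit_row_delta -rowE. Qed.

Lemma unit_row_out m y : (m <= y)%N -> unit_row F m y = 0.
Proof.
move=> le_my; apply/rowP => c; rewrite !mxE.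
by rewrite gtn_eqF // (leq_trans (ltn_ord c) le_my).
Qed.

Lemma row_pid_mx m m' (y : 'I_m) :
  row y (pid_mx m : 'M[F]_(m, m')) = unit_row F m' y.
Proof. by apply/rowP => c; rewrite !mxE ltn_ord andbT. Qed.

Lemma unit_row_pid m m' y :
  (y < m)%N -> unit_row F m y *m (pid_mx m : 'M_(m, m')) = unit_row F m' y.
Proof. by move=> lt_ym; rewrite (unit_row_mul (Ordinal lt_ym)) row_pid_mx. Qed.

Lemma row1_unit m (y : 'I_m) : row y (1%:M : 'M[F]_m) = unit_row F m y.
Proof. by rewrite row1 unit_row_delta. Qed.

End UnitRow.

Section ChainSplitting.
Variables (F : fieldType) (n : nat) (d e : nat -> nat).
Variables (A : forall t, 'M[F]_(e t, e t.+1)).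
Variables (j : forall t, 'M[F]_(d t, e t)) (p : forall t, 'M[F]_(e t, d t)).
Hypothesis jA : forall t, (t < n)%N -> j t *m A t = pid_mx (d t) *m j t.+1.
Hypothesis pA : forall t, (t < n)%N -> p t *m pid_mx (d t) = A t *m p t.+1.
Hypothesis p_full : forall t, (t <= n)%N -> row_full (p t).
Hypothesis j_ker : forall t, (t <= n)%N -> (j t == kermx (p t))%MS.

Let kermx_sub_j t : (t <= n)%N -> (kermx (p t) <= j t)%MS.
Proof. by move=> tn; case/andP: (j_ker tn). Qed.

Let mul_j_p t : (t <= n)%N -> j t *m p t = 0.
Proof. by move=> tn; case/andP: (j_ker tn) => /sub_kermxP. Qed.

Fixpoint vanishes_past_strand (y k t : nat) : 'rV[F]_(e t) -> bool :=
  match k with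
  | 0 => fun=> true
  | k.+1 => fun w =>
      if (y < d t.+1)%N then @vanishes_past_strand y k t.+1 (w *m A t)
      else w *m A t == 0
  end.

Definition strand_lift {t} y (w : 'rV[F]_(e t)) :=
  (w *m p t == unit_row F (d t) y) && vanishes_past_strand y (n - t) w.

(* The correction lives in rows < y: they are present in every column of the
   strand, so pid_mx y carries them along unchanged. *)
Lemma strand_correction k t y (w : 'rV[F]_(e t)) :
  (t + k <= n)%N -> (y < d t)%N -> w *m p t = unit_row F (d t) y ->
  exists u : 'rV[F]_y, vanishes_past_strand y k (w + u *m pid_mx y *m j t).
Proof.
elim: k t w => [|k IHk] t w tkn lt_yd wp; first by exists 0.
have lt_tn : (t < n)%N by rewrite (leq_trans _ tkn) // -addn1 leq_add2l.
have push u : (w + u *m pid_mx y *m j t) *m A t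
              = w *m A t + u *m pid_mx y *m j t.+1.
  rewrite mulmxDl -!mulmxA jA // !mulmxA -(mulmxA u) mul_pid_mx.
  by rewrite (minn_idPl (ltnW lt_yd)) (minn_idPr (ltnW lt_yd)).
have wAp : w *m A t *m p t.+1 = unit_row F (d t.+1) y.
  by rewrite -mulmxA -pA // mulmxA wp unit_row_pid.
case: (ltnP y (d t.+1)) => [lt_yd1 | le_dy].
  have [|u vu] := IHk t.+1 (w *m A t) _ lt_yd1 wAp; first by rewrite addSnnS.
  by exists u; rewrite /= lt_yd1 push.
have /submxP [v wAv] : (w *m A t <= j t.+1)%MS.
  apply: submx_trans (kermx_sub_j lt_tn); apply/sub_kermxP.
  by rewrite wAp unit_row_out.
exists (- v *m pid_mx (d t.+1)); rewrite /= ltnNge le_dy /= push wAv.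
rewrite -(mulmxA (- v)) mul_pid_mx (minn_idPl le_dy) (minn_idPr le_dy).
by rewrite pid_mx_1 mulmx1 mulNmx addrN.
Qed.

Lemma exists_strand_lift t y :
  exists w : 'rV[F]_(e t), ((t <= n) && (y < d t))%N ==> strand_lift y w.
Proof.
case tn: (t <= n)%N; last by exists 0.
case: (ltnP y (d t)) => [lt_yd|]; last by exists 0.
have [B Bp] := row_fullP (p_full tn).
have wp : unit_row F (d t) y *m B *m p t = unit_row F (d t) y.
  by rewrite -mulmxA Bp mulmx1.
have [|u vu] := strand_correction (k := n - t) _ lt_yd wp; first by rewrite subnKC.
exists (unit_row F (d t) y *m B + u *m pid_mx y *m j t).
by rewrite /strand_lift /= vu andbT mulmxDl wp -mulmxA mul_j_p // mulmx0 addr0.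
Qed.

Definition fresh_lift t y : 'rV[F]_(e t) := xchoose (exists_strand_lift t y).

Lemma fresh_liftP t (y : 'I_(d t)) : (t <= n)%N -> strand_lift y (fresh_lift t y).
Proof.
move=> tn; have /implyP := xchooseP (exists_strand_lift t y).
by apply; rewrite tn ltn_ord.
Qed.

(* Rows y < m are left empty: they continue strands from the previous column. *)
Definition fresh_rows t m : 'M[F]_(d t, e t) :=
  \matrix_(y < d t) (if (y < m)%N then 0 else fresh_lift t y).

Fixpoint chain_section t : 'M[F]_(d t, e t) :=
  match t with
  | 0 => fresh_rows 0 0
  | t'.+1 => pid_mx (d t'.+1) *m (chain_section t' *m A t') + fresh_rows t'.+1 (d t')
  end.

Lemma chain_section_lift t :
  (t <= n)%N -> forall y : 'I_(d t), strand_lift y (row y (chain_section t)).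
Proof.
elim: t => [|t IHt] tn y; first by rewrite rowK; exact: fresh_liftP.
rewrite /= linearD /= row_mul row_pid_mx rowK.
case: (ltnP y (d t)) => [lt_yd | le_dy]; last first.
  by rewrite unit_row_out // mul0mx add0r; exact: fresh_liftP.
rewrite addr0 (unit_row_mul (Ordinal lt_yd)) row_mul.
have /andP [/eqP wp vw] := IHt (ltnW tn) (Ordinal lt_yd).
rewrite /strand_lift -mulmxA -pA // mulmxA wp unit_row_pid // eqxx /=.
by move: vw; rewrite -(subnSK tn) /= ltn_ord.
Qed.

Lemma chain_section_p t : (t <= n)%N -> chain_section t *m p t = 1%:M.
Proof.
move=> tn; apply/row_matrixP => y; rewrite row_mul row1_unit.
by have /andP [/eqP -> _] := chain_section_lift tn y.
Qed.

Lemma chain_section_A t :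
  (t < n)%N -> chain_section t *m A t = pid_mx (d t) *m chain_section t.+1.
Proof.
move=> lt_tn; apply/row_matrixP => y; rewrite !row_mul row_pid_mx.
case: (ltnP y (d t.+1)) => [lt_yd1 | le_dy].
  rewrite (unit_row_mul (Ordinal lt_yd1)) /= linearD /= row_mul row_pid_mx.
  by rewrite rowK /= ltn_ord addr0 unit_row_mul row_mul.
rewrite unit_row_out // mul0mx.
have /andP [_] := chain_section_lift (ltnW lt_tn) y.
by rewrite -(subnSK lt_tn) /= ltnNge le_dy => /eqP.
Qed.

Lemma chain_split :
  exists s : forall t, 'M[F]_(d t, e t),
    (forall t, (t <= n)%N -> s t *m p t = 1%:M) /\
    (forall t, (t < n)%N -> s t *m A t = pid_mx (d t) *m s t.+1).
Proof.
by exists chain_section; split; [exact: chain_section_p | exact: chain_section_A].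
Qed.

End ChainSplitting.

Lemma castmx_mul (F : fieldType) m m' k k' l l'
    (em : m = m') (ek : k = k') (el : l = l') (M : 'M[F]_(m, k)) (N : 'M[F]_(k, l)) :
  castmx (em, ek) M *m castmx (ek, el) N = castmx (em, el) (M *m N).
Proof. by case: m' / em; case: k' / ek; case: l' / el; rewrite !castmx_id. Qed.

Section QuiverChain.
Variables (F : fieldType) (n : nat).
Implicit Types R S : qrep F n.

Lemma src_inord (i : 'I_n) : src i = inord i.
Proof. by apply: val_inj; rewrite /= inordK // leqW. Qed.

Lemma tgt_inord (i : 'I_n) : tgt i = inord i.+1.
Proof. by apply: val_inj; rewrite /= /bump leq0n add1n inordK // ltnS ltn_ord. Qed.

(* The arrow maps of R reindexed by nat; junk value 0 past the last vertex. *)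
Definition chain_map R t : 'M[F]_(qdim R (inord t), qdim R (inord t.+1)) :=
  match ltnP t n with
  | LtnNotGeq lt_tn =>
      castmx (congr1 (qdim R) (src_inord (Ordinal lt_tn)),
              congr1 (qdim R) (tgt_inord (Ordinal lt_tn))) (qmap R (Ordinal lt_tn))
  | GeqNotLtn _ => 0
  end.

Lemma chain_mapE R (i : 'I_n) :
  chain_map R i = castmx (congr1 (qdim R) (src_inord i), congr1 (qdim R) (tgt_inord i))
                         (qmap R i).
Proof.
case: i => t lt_tn; rewrite /chain_map.
case: ltnP => [lt_tn'|]; last by rewrite leqNgt lt_tn.
by rewrite (bool_irrelevance lt_tn' lt_tn).
Qed.

Lemma castmx_qfam R S (f : qfam R S) a b (e : a = b) :
  castmx (congr1 (qdim R) e, congr1 (qdim S) e) (f a) = f b.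
Proof. by case: b / e; rewrite castmx_id. Qed.

Lemma qmorph_chainP R S (f : qfam R S) :
  is_qmorph f <->
  forall t, (t < n)%N -> f (inord t) *m chain_map S t = chain_map R t *m f (inord t.+1).
Proof.
have square (i : 'I_n) : f (src i) *m qmap S i = qmap R i *m f (tgt i) <->
    f (inord i) *m chain_map S i = chain_map R i *m f (inord i.+1).
  rewrite !chain_mapE -(castmx_qfam f (src_inord i)) -(castmx_qfam f (tgt_inord i)).
  by rewrite !castmx_mul; split=> [-> | /(can_inj (castmxK _ _))].
by split=> [fM t lt_tn | fM i]; [apply/(square (Ordinal lt_tn)) | apply/square/fM].
Qed.

Lemma lace_chain_map (d : 'I_n.+1 -> nat) t :
  (t < n)%N -> chain_map (lace_module F d) t = pid_mx (d (inord t)).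
Proof.
move=> lt_tn; rewrite (chain_mapE _ (Ordinal lt_tn)).
by apply/matrixP => a b; rewrite castmxE !mxE /= ltn_ord andbT.
Qed.

Definition qfam_of_chain R S (g : forall t, 'M[F]_(qdim R (inord t), qdim S (inord t))) :
    qfam R S :=
  fun x => castmx (congr1 (qdim R) (inord_val x), congr1 (qdim S) (inord_val x)) (g x).

Lemma qfam_of_chain_inord R S g t : (t <= n)%N -> @qfam_of_chain R S g (inord t) = g t.
Proof.
have cast_g k (ek : k = t) (e : inord k = inord t :> 'I_n.+1) :
    castmx (congr1 (qdim R) e, congr1 (qdim S) e) (g k) = g t.
  by subst k; rewrite (eq_irrelevance e erefl) castmx_id.
by move=> tn; apply: cast_g; rewrite inordK.
Qed.

End QuiverChain.

Theorem lace_ext1_zero (F : fieldType) (n : nat) (d : 'I_n.+1 -> nat) :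
  ext1_zero (lace_module F d) (lace_module F d).
Proof.
move=> E j p [jM pM exact_jp].
have jA t : (t < n)%N ->
    j (inord t) *m chain_map E t = pid_mx (d (inord t)) *m j (inord t.+1).
  by move=> lt_tn; rewrite -lace_chain_map //; apply: (qmorph_chainP j).1.
have pA t : (t < n)%N ->
    p (inord t) *m pid_mx (d (inord t)) = chain_map E t *m p (inord t.+1).
  by move=> lt_tn; rewrite -lace_chain_map //; apply: (qmorph_chainP p).1.
have p_full t : (t <= n)%N -> row_full (p (inord t)) by have [] := exact_jp (inord t).
have j_ker t : (t <= n)%N -> (j (inord t) == kermx (p (inord t)))%MS.
  by have [] := exact_jp (inord t).
have [g [gp gA]] := chain_split jA pA p_full j_ker.
exists (qfam_of_chain g); split.
  apply/qmorph_chainP => t lt_tn.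
  by rewrite !qfam_of_chain_inord ?(ltnW lt_tn) // lace_chain_map // gA.
move=> x; have := gp x (ltn_ord x).
by rewrite -(qfam_of_chain_inord g (ltn_ord x)) inord_val.
Qed.

Theorem corollary2p5 (n : nat) (d : 'I_n.+1 -> nat) :
  ext1_zero (lace_module Cplx d) (lace_module Cplx d).
Proof. exact: lace_ext1_zero. Qed.
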